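(* Let $p_{Y_1,Y_2|X_1,X_2}$ be a discrete memoryless channel and let $(U_{10},U_{11},V_{11},V_{20},V_{22},X_1,X_2)$ be finite-valued random variables with any joint distribution, $(Y_1,Y_2)$ generated through the channel. Let $\mathcal R_{CC}(p)$ be the set of $(R_1,R_2)$ satisfying \begin{align*} R_1 &\le I(Y_1;V_{11},U_{11},V_{20},U_{10}),\\ R_2 &\le I(Y_2;V_{20},V_{22}|U_{10})-I(V_{22},V_{20};U_{11}|U_{10}),\\ R_1+R_2 &\le I(Y_1;V_{11},U_{11}|V_{20},U_{10})+I(Y_2;V_{22},V_{20},U_{10})-I(V_{22};U_{11},V_{11}|V_{20},U_{10}),\\ R_1+R_2 &\le I(Y_1;V_{11},U_{11},V_{20},U_{10})+I(Y_2;V_{22}|V_{20},U_{10})-I(V_{22};U_{11},V_{11}|V_{20},U_{10}),\\ 2R_2+R_1 &\le I(Y_1;V_{11},U_{11},V_{20}|U_{10})+I(Y_2;V_{22}|V_{20},U_{10})+I(Y_2;V_{20},V_{22},U_{10})\\ &\quad -I(V_{22};U_{11},V_{11}|V_{20},U_{10})-I(V_{22},V_{20};U_{11}|U_{10}), \end{align*} and let $\mathcal R_{CC}=\bigcup_p \mathcal R_{CC}(p)$. Let $p'$ be obtained from $p$ by setting $U'_{11}$ constant and $V'_{11}=(V_{11},U_{11})$, all other variables unchanged. Then $\mathcal R_{CC}(p)\subseteq\mathcal R_{CC}(p')$; in particular $\mathcal R_{CC}$ equals the union of $\mathcal R_{CC}(p)$ over distributions in which $U_{11}$ is constant.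
   Context: $\mathcal R_{CC}$ is the achievable rate region of Cao and Chen for the cognitive interference channel, written with index 1 for the primary user and index 2 for the cognitive user; $U_{10},U_{11},V_{11},V_{20},V_{22}$ are auxiliary random variables. All mutual informations are evaluated under the indicated joint distribution. *)

From Stdlib Require Import Reals.
From mathcomp Require Import all_boot.
Set Implicit Arguments. Unset Strict Implicit. Unset Printing Implicit Defensive.

Local Open Scope R_scope.

Definition rsum (T : finType) (F : T -> R) : R := \big[Rplus/R0]_(t : T) F t.

Definition is_pmf (T : finType) (p : T -> R) : Prop :=
  (forall t, 0 <= p t) /\ rsum p = 1.

Definition log2 (x : R) : R := ln x / ln 2.

Definition law (Om T : finType) (p : Om -> R) (f : Om -> T) (t : T) : R :=
  \big[Rplus/R0]_(w : Om | f w == t) p w.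

(* Shannon entropy in bits (convention 0 log 0 = 0, since ln 0 = 0 in Stdlib). *)
Definition entropy (Om T : finType) (p : Om -> R) (f : Om -> T) : R :=
  rsum (fun t => - (law p f t * log2 (law p f t))).

Definition cmi (Om A B C : finType) (p : Om -> R)
  (a : Om -> A) (b : Om -> B) (c : Om -> C) : R :=
  entropy p (fun w => (a w, c w)) + entropy p (fun w => (b w, c w))
  - entropy p (fun w => (a w, b w, c w)) - entropy p c.

Definition mi (Om A B : finType) (p : Om -> R) (a : Om -> A) (b : Om -> B) : R :=
  cmi p a b (fun _ => tt).

Definition is_channel (X1 X2 Y1 Y2 : finType) (W : X1 -> X2 -> Y1 * Y2 -> R) : Prop :=
  forall x1 x2, is_pmf (W x1 x2).

Definition tup7 (U10 U11 V11 V20 V22 X1 X2 : finType) : finType :=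
  (U10 * U11 * V11 * V20 * V22 * X1 * X2)%type.

Section RCC.
Variables (U10 U11 V11 V20 V22 X1 X2 Y1 Y2 : finType).
Variable W : X1 -> X2 -> Y1 * Y2 -> R.
Variable P : tup7 U10 U11 V11 V20 V22 X1 X2 -> R.

Definition Omega : finType := (tup7 U10 U11 V11 V20 V22 X1 X2 * (Y1 * Y2))%type.

Definition jointP (w : Omega) : R := P w.1 * W w.1.1.2 w.1.2 w.2.

Definition rU10 (w : Omega) : U10 := w.1.1.1.1.1.1.1.
Definition rU11 (w : Omega) : U11 := w.1.1.1.1.1.1.2.
Definition rV11 (w : Omega) : V11 := w.1.1.1.1.1.2.
Definition rV20 (w : Omega) : V20 := w.1.1.1.1.2.
Definition rV22 (w : Omega) : V22 := w.1.1.1.2.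
Definition rY1 (w : Omega) : Y1 := w.2.1.
Definition rY2 (w : Omega) : Y2 := w.2.2.

Definition inRCC (R1 R2 : R) : Prop :=
  let p := jointP in
  R1 <= mi p rY1 (fun w => (rV11 w, rU11 w, rV20 w, rU10 w)) /\
  R2 <= cmi p rY2 (fun w => (rV20 w, rV22 w)) rU10
        - cmi p (fun w => (rV22 w, rV20 w)) rU11 rU10 /\
  R1 + R2 <= cmi p rY1 (fun w => (rV11 w, rU11 w)) (fun w => (rV20 w, rU10 w))
             + mi p rY2 (fun w => (rV22 w, rV20 w, rU10 w))
             - cmi p rV22 (fun w => (rU11 w, rV11 w)) (fun w => (rV20 w, rU10 w)) /\
  R1 + R2 <= mi p rY1 (fun w => (rV11 w, rU11 w, rV20 w, rU10 w))
             + cmi p rY2 rV22 (fun w => (rV20 w, rU10 w))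
             - cmi p rV22 (fun w => (rU11 w, rV11 w)) (fun w => (rV20 w, rU10 w)) /\
  2 * R2 + R1 <= cmi p rY1 (fun w => (rV11 w, rU11 w, rV20 w)) rU10
                 + cmi p rY2 rV22 (fun w => (rV20 w, rU10 w))
                 + mi p rY2 (fun w => (rV20 w, rV22 w, rU10 w))
                 - cmi p rV22 (fun w => (rU11 w, rV11 w)) (fun w => (rV20 w, rU10 w))
                 - cmi p (fun w => (rV22 w, rV20 w)) rU11 rU10.
End RCC.

Definition mergeU11 (U10 U11 V11 V20 V22 X1 X2 : finType)
  (P : tup7 U10 U11 V11 V20 V22 X1 X2 -> R)
  (t : tup7 U10 unit (V11 * U11)%type V20 V22 X1 X2) : R :=
  let: (u10, _, (v11, u11), v20, v22, x1, x2) := t in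
  P (u10, u11, v11, v20, v22, x1, x2).

(* The proof rests on two facts about
   Shannon information over finite sample spaces.
   (1) An entropy H(f) depends only on the partition of the sample space
       induced by the random variable f, and is invariant under a bijection of
       sample spaces preserving the probability weights.  Hence every
       (conditional) mutual information in the definition of R_CC is the same
       under p and p', except those in which U11 occurs on its own.
   (2) Conditional mutual information is nonnegative (Gibbs' inequality, via
       ln x <= x - 1), and it vanishes when one argument is constant.
   The only term of R_CC mentioning U11 alone is the penalty I(V22,V20;U11|U10),
   which is >= 0 under p and = 0 under p'; every bound of R_CC(p) therefore
   implies the corresponding bound of R_CC(p'). *)

From HB Require Import structures.
From Stdlib Require Import Reals Lra.
From mathcomp Require Import all_boot.
Set Implicit Arguments. Unset Strict Implicit.
Local Open Scope R_scope.

Lemma RplusA : associative Rplus. Proof. by move=> *; rewrite Rplus_assoc. Qed.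
HB.instance Definition _ :=
  Monoid.isComLaw.Build R R0 Rplus RplusA Rplus_comm Rplus_0_l.

Section RealSums.
Variables (I : finType) (P : pred I).

Lemma bigR_mulr (G : I -> R) c :
  \big[Rplus/R0]_(i | P i) (G i * c) = (\big[Rplus/R0]_(i | P i) G i) * c.
Proof. by apply: (big_rec2 (fun a b => a = b * c)) => [|i a b _ ->]; lra. Qed.

Lemma bigR_mull (G : I -> R) c :
  \big[Rplus/R0]_(i | P i) (c * G i) = c * \big[Rplus/R0]_(i | P i) G i.
Proof. by apply: (big_rec2 (fun a b => a = c * b)) => [|i a b _ ->]; lra. Qed.

Lemma bigR_opp (G : I -> R) :
  \big[Rplus/R0]_(i | P i) (- G i) = - \big[Rplus/R0]_(i | P i) G i.
Proof. by apply: (big_rec2 (fun a b => a = - b)) => [|i a b _ ->]; lra. Qed.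

(* [big_split], stated with the operator kept syntactically as [Rplus]. *)
Lemma bigR_add (G H : I -> R) :
  \big[Rplus/R0]_(i | P i) (G i + H i) =
  \big[Rplus/R0]_(i | P i) G i + \big[Rplus/R0]_(i | P i) H i.
Proof. exact: big_split. Qed.

Lemma bigR_le (G H : I -> R) :
  (forall i, P i -> G i <= H i) ->
  \big[Rplus/R0]_(i | P i) G i <= \big[Rplus/R0]_(i | P i) H i.
Proof.
move=> GH; apply: (big_rec2 (fun a b => a <= b)) => [|i a b Pi ab]; first lra.
by have := GH i Pi; lra.
Qed.

Lemma bigR_ge0 (G : I -> R) :
  (forall i, P i -> 0 <= G i) -> 0 <= \big[Rplus/R0]_(i | P i) G i.
Proof.
move=> G0; apply: (big_rec (fun a => 0 <= a)) => [|i a Pi a0]; first lra.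
by have := G0 i Pi; lra.
Qed.
End RealSums.

Lemma sum_prod (I J : finType) (F : I -> R) (G : J -> R) c :
  \big[Rplus/R0]_i \big[Rplus/R0]_j (F i * G j * c) =
  (\big[Rplus/R0]_i F i) * (\big[Rplus/R0]_j G j) * c.
Proof.
rewrite -!bigR_mulr; apply: eq_bigr => i _.
by rewrite -bigR_mull -bigR_mulr.
Qed.

Lemma sum_by_law (Om T : finType) (p : Om -> R) (f : Om -> T) (F : T -> R) :
  \big[Rplus/R0]_w (p w * F (f w)) = \big[Rplus/R0]_t (law p f t * F t).
Proof.
rewrite (partition_big f predT) //=; apply: eq_bigr => t _.
by rewrite /law -bigR_mulr; apply: eq_bigr => w /eqP ->.
Qed.

Lemma entropyE (Om T : finType) (p : Om -> R) (f : Om -> T) :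
  entropy p f = - \big[Rplus/R0]_w (p w * log2 (law p f (f w))).
Proof. by rewrite (sum_by_law p f (fun t => log2 (law p f t))) -bigR_opp. Qed.

Definition equiv_on (Om Om' T T' : finType)
  (s : Om' -> Om) (f' : Om' -> T') (f : Om -> T) : Prop :=
  forall w1 w2, f' w1 = f' w2 <-> f (s w1) = f (s w2).

Lemma equiv_on_pair (Om Om' A A' C C' : finType) (s : Om' -> Om)
  (a' : Om' -> A') (a : Om -> A) (c' : Om' -> C') (c : Om -> C) :
  equiv_on s a' a -> equiv_on s c' c ->
  equiv_on s (fun w => (a' w, c' w)) (fun w => (a w, c w)).
Proof.
move=> ha hc w1 w2; rewrite !pair_equal_spec.
by have := ha w1 w2; have := hc w1 w2; tauto.
Qed.

Lemma entropy_transfer (Om Om' T T' : finType) (p : Om -> R) (p' : Om' -> R)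
  (s : Om' -> Om) (f : Om -> T) (f' : Om' -> T') :
  bijective s -> (forall w, p' w = p (s w)) -> equiv_on s f' f ->
  entropy p' f' = entropy p f.
Proof.
move=> bs hp hf; rewrite !entropyE (reindex s); last exact: onW_bij.
congr (- _); apply: eq_bigr => w _; rewrite hp; congr (_ * log2 _).
rewrite /law (reindex s); last exact: onW_bij.
by apply: eq_big => [w'|w' _]; [apply/eqP/eqP => /hf|rewrite hp].
Qed.

Lemma entropy_equiv (Om T T' : finType) (p : Om -> R) (f : Om -> T)
  (g : Om -> T') : equiv_on id f g -> entropy p f = entropy p g.
Proof. by move=> fg; apply: (entropy_transfer (s := id)) => //; exists id. Qed.

Lemma cmi_transfer (Om Om' A A' B B' C C' : finType) (p : Om -> R)
  (p' : Om' -> R) (s : Om' -> Om) (a' : Om' -> A') (a : Om -> A)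
  (b' : Om' -> B') (b : Om -> B) (c' : Om' -> C') (c : Om -> C) :
  bijective s -> (forall w, p' w = p (s w)) ->
  equiv_on s a' a -> equiv_on s b' b -> equiv_on s c' c ->
  cmi p' a' b' c' = cmi p a b c.
Proof.
move=> bs hp ha hb hc; rewrite /cmi.
rewrite (entropy_transfer (f := fun w => (a w, c w)) bs hp (equiv_on_pair ha hc)).
rewrite (entropy_transfer (f := fun w => (b w, c w)) bs hp (equiv_on_pair hb hc)).
rewrite (entropy_transfer (f := fun w => (a w, b w, c w)) bs hp
          (equiv_on_pair (equiv_on_pair ha hb) hc)).
by rewrite (entropy_transfer bs hp hc).
Qed.

Lemma mi_transfer (Om Om' A A' B B' : finType) (p : Om -> R) (p' : Om' -> R)
  (s : Om' -> Om) (a' : Om' -> A') (a : Om -> A) (b' : Om' -> B')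
  (b : Om -> B) :
  bijective s -> (forall w, p' w = p (s w)) ->
  equiv_on s a' a -> equiv_on s b' b -> mi p' a' b' = mi p a b.
Proof. by move=> bs hp ha hb; apply: (cmi_transfer bs hp ha hb) => w1 w2. Qed.

Lemma cmi_unit (Om A C : finType) (p : Om -> R) (a : Om -> A)
  (b : Om -> unit) (c : Om -> C) : cmi p a b c = 0.
Proof.
have bE w1 w2 : b w1 = b w2 by case: (b w1); case: (b w2).
rewrite /cmi (@entropy_equiv _ _ _ p (fun w => (b w, c w)) c); last first.
  by move=> w1 w2; rewrite pair_equal_spec; have := bE w1 w2; tauto.
rewrite (@entropy_equiv _ _ _ p (fun w => (a w, b w, c w))
           (fun w => (a w, c w))); first lra.
by move=> w1 w2; rewrite !pair_equal_spec; have := bE w1 w2; tauto.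
Qed.

Section Law.
Variables (Om : finType) (p : Om -> R).
Hypothesis p_ge0 : forall w, 0 <= p w.

Lemma law_ge0 (T : finType) (f : Om -> T) t : 0 <= law p f t.
Proof. exact: bigR_ge0. Qed.

Lemma law_mono (T T' : finType) (f : Om -> T) (g : Om -> T') t u :
  (forall w, f w = t -> g w = u) -> law p f t <= law p g u.
Proof.
move=> fg; rewrite /law (big_mkcond (fun w => f w == t)).
rewrite (big_mkcond (fun w => g w == u)); apply: bigR_le => w _.
case: eqP => [/fg ->|_]; rewrite ?eqxx; first lra.
by case: (_ == _); [apply: p_ge0|lra].
Qed.

Lemma law_self (T : finType) (f : Om -> T) w : p w <= law p f (f w).
Proof.
rewrite /law (bigD1 w) ?eqxx //=.
have := @bigR_ge0 _ (fun i => (f i == f w) && (i != w)) p (fun i _ => p_ge0 i).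
lra.
Qed.

Lemma law_marg (A C : finType) (a : Om -> A) (c : Om -> C) z :
  \big[Rplus/R0]_x law p (fun w => (a w, c w)) (x, z) = law p c z.
Proof.
rewrite /law (partition_big a predT) //=; apply: eq_bigr => x _.
by apply: eq_bigl => w; rewrite xpair_eqE andbC.
Qed.

Lemma law_total (T : finType) (f : Om -> T) :
  \big[Rplus/R0]_t law p f t = \big[Rplus/R0]_w p w.
Proof.
by rewrite [RHS](partition_big f predT).
Qed.
End Law.

Lemma ln_le_sub1 x : 0 < x -> ln x <= x - 1.
Proof. by move=> x0; have := exp_ineq1_le (ln x); rewrite exp_ln //; lra. Qed.

Lemma ln2_gt0 : 0 < ln 2.
Proof. by rewrite -ln_1; apply: ln_increasing; lra. Qed.

Lemma ln_ratio_bound ac bc abc c :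
  0 < ac -> 0 < bc -> 0 < abc -> 0 < c ->
  1 - ac * bc / (abc * c) <= ln abc + ln c - ln ac - ln bc.
Proof.
move=> hac hbc habc hc.
have hx : 0 < ac * bc / (abc * c) by apply: Rdiv_lt_0_compat; nra.
move: (ln_le_sub1 hx); rewrite /Rdiv in hx *.
rewrite ln_mult ?ln_Rinv ?ln_mult; first lra; try nra.
by apply: Rinv_0_lt_compat; nra.
Qed.

(* If 0 <= abc <= c, then abc * (ac * bc / (abc * c)) <= ac * bc / c,
   with equality unless abc = 0 (recall that / 0 = 0). *)
Lemma weighted_bound ac bc abc c :
  0 <= ac -> 0 <= bc -> 0 <= abc -> abc <= c ->
  abc * (ac * bc / (abc * c)) <= ac * bc / c.
Proof.
move=> hac hbc [habc|<-] abc_c; first by apply: Req_le; field; lra.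
rewrite Rmult_0_l; have [hc|<-] : 0 < c \/ 0 = c by lra.
  by apply: Rle_mult_inv_pos; nra.
by rewrite /Rdiv Rinv_0; lra.
Qed.

(* Writing P_ac, P_bc, P_abc,
   P_c for the probabilities of the observed values, I(A;B|C) is the
   expectation of the density ln (P_abc P_c / (P_ac P_bc)) divided by ln 2;
   the density is >= 1 - ratio with ratio = P_ac P_bc / (P_abc P_c), and
   the expected ratio is at most the total mass. *)
Section CmiNonneg.
Variables (Om A B C : finType) (p : Om -> R).
Variables (a : Om -> A) (b : Om -> B) (c : Om -> C).
Hypothesis p_ge0 : forall w, 0 <= p w.

Let fac w := (a w, c w).
Let fbc w := (b w, c w).
Let fabc w := (a w, b w, c w).

Let ratio (t : A * B * C) : R :=
  law p fac (t.1.1, t.2) * law p fbc (t.1.2, t.2)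
  / (law p fabc t * law p c t.2).

Let dens w : R :=
  ln (law p fabc (fabc w)) + ln (law p c (c w))
  - ln (law p fac (fac w)) - ln (law p fbc (fbc w)).

Lemma cmi_as_sum : cmi p a b c = \big[Rplus/R0]_w (p w * dens w) / ln 2.
Proof.
have l2 := ln2_gt0.
rewrite /cmi !entropyE /Rdiv -bigR_mulr.
rewrite [RHS](eq_bigr (fun w =>
  p w * log2 (law p fabc (fabc w)) + p w * log2 (law p c (c w))
  + - (p w * log2 (law p fac (fac w))) + - (p w * log2 (law p fbc (fbc w)))));
  last by move=> w _; rewrite /dens /log2; field; lra.
rewrite !bigR_add !bigR_opp /fabc /fac /fbc /=; lra.
Qed.

(* Pointwise form of ln x <= x - 1, applied to x = ratio. *)
Lemma dens_ge w : 0 < p w -> 1 - ratio (fabc w) <= dens w.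
Proof.
move=> pw; have pos (T : finType) (f : Om -> T) : 0 < law p f (f w).
  by have := law_self p_ge0 f w; lra.
exact: ln_ratio_bound (pos _ fac) (pos _ fbc) (pos _ fabc) (pos _ c).
Qed.

(* Each weighted ratio is dominated by P_ac P_bc / P_c, which no longer
   involves the joint law of (A, B, C). *)
Lemma weighted_ratio_le t :
  law p fabc t * ratio t <=
  law p fac (t.1.1, t.2) * law p fbc (t.1.2, t.2) / law p c t.2.
Proof.
apply: weighted_bound; try exact: law_ge0.
by apply: law_mono => // w <-.
Qed.

Lemma expected_ratio_le :
  \big[Rplus/R0]_w (p w * ratio (fabc w)) <= \big[Rplus/R0]_w p w.
Proof.
rewrite (sum_by_law p fabc ratio).
apply: Rle_trans (bigR_le (fun t _ => weighted_ratio_le t)) _.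
have regroup : forall F : A * B * C -> R, \big[Rplus/R0]_t F t =
    \big[Rplus/R0]_z \big[Rplus/R0]_x \big[Rplus/R0]_y F (x, y, z).
  move=> F; transitivity (\big[Rplus/R0]_xy \big[Rplus/R0]_z F (xy, z)).
    by rewrite pair_bigA; apply: eq_bigr => -[].
  transitivity (\big[Rplus/R0]_x \big[Rplus/R0]_y \big[Rplus/R0]_z F (x, y, z)).
    by rewrite [RHS]pair_bigA; apply: eq_bigr => -[].
  rewrite [RHS]exchange_big; apply: eq_bigr => x _.
  by rewrite exchange_big.
rewrite regroup -(law_total p c); apply: bigR_le => z _ /=.
rewrite /Rdiv sum_prod (law_marg p a c) (law_marg p b c).
have [hc|<-] := law_ge0 p_ge0 c z; last by rewrite Rinv_0; lra.
by apply: Req_le; field; lra.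
Qed.

Lemma cmi_ge0 : 0 <= cmi p a b c.
Proof.
rewrite cmi_as_sum; apply: Rle_mult_inv_pos ln2_gt0.
have dens_weighted w : p w * (1 - ratio (fabc w)) <= p w * dens w.
  have [pw|<-] := p_ge0 w; last lra.
  by apply: Rmult_le_compat_l; [lra|apply: dens_ge].
apply: Rle_trans (bigR_le (fun w _ => dens_weighted w)).
under eq_bigr do rewrite Rmult_minus_distr_l Rmult_1_r /Rminus.
by rewrite bigR_add bigR_opp; have := expected_ratio_le; lra.
Qed.
End CmiNonneg.

Lemma jointP_ge0 (U10 U11 V11 V20 V22 X1 X2 Y1 Y2 : finType)
  (W : X1 -> X2 -> (Y1 * Y2)%type -> R) (P : tup7 U10 U11 V11 V20 V22 X1 X2 -> R) :
  is_channel W -> is_pmf P -> forall w, 0 <= jointP W P w.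
Proof.
move=> HW [P_ge0 _] w; apply: Rmult_le_pos; first exact: P_ge0.
by case: (HW w.1.1.2 w.1.2) => W_ge0 _; apply: W_ge0.
Qed.

(* The merge of U11 into V11 is a relabelling of the sample space. *)
Section MergeU11.
Variables (U10 U11 V11 V20 V22 X1 X2 Y1 Y2 : finType).
Variable W : X1 -> X2 -> (Y1 * Y2)%type -> R.
Variable P : tup7 U10 U11 V11 V20 V22 X1 X2 -> R.

Local Notation tup7' := (tup7 U10 unit (V11 * U11)%type V20 V22 X1 X2).
Local Notation Omega' := (Omega U10 unit (V11 * U11)%type V20 V22 X1 X2 Y1 Y2).

Definition split_input (t : tup7') : tup7 U10 U11 V11 V20 V22 X1 X2 :=
  let: (u10, _, (v11, u11), v20, v22, x1, x2) := t in
  (u10, u11, v11, v20, v22, x1, x2).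

Lemma split_input_bij : bijective split_input.
Proof.
exists (fun t => let: (u10, u11, v11, v20, v22, x1, x2) := t in
                 (u10, tt, (v11, u11), v20, v22, x1, x2)).
  by case=> [[[[[[u10 []] [v11 u11]] v20] v22] x1] x2].
by case=> [[[[[[u10 u11] v11] v20] v22] x1] x2].
Qed.

Lemma mergeU11E t : mergeU11 P t = P (split_input t).
Proof. by case: t => [[[[[[u10 []] [v11 u11]] v20] v22] x1] x2]. Qed.

Lemma mergeU11_pmf : is_pmf P -> is_pmf (mergeU11 P).
Proof.
case=> P_ge0 P_sum; split=> [t|]; first by rewrite mergeU11E.
rewrite -P_sum /rsum (reindex split_input); last exact: onW_bij split_input_bij.
by apply: eq_bigr => t _; rewrite mergeU11E.
Qed.

Definition split_outcome (w : Omega') : Omega U10 U11 V11 V20 V22 X1 X2 Y1 Y2 :=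
  (split_input w.1, w.2).

Lemma split_outcome_bij : bijective split_outcome.
Proof.
have [g gK Kg] := split_input_bij.
by exists (fun w => (g w.1, w.2)) => -[t y]; rewrite /split_outcome /= ?gK ?Kg.
Qed.

Lemma jointP_mergeU11 w : jointP W (mergeU11 P) w = jointP W P (split_outcome w).
Proof. by case: w => [[[[[[[u10 []] [v11 u11]] v20] v22] x1] x2] y]. Qed.
End MergeU11.

(* Each random variable of R_CC(p'), except U'11 alone, determines and is
   determined by its counterpart under p: check it on every outcome. *)
Ltac same_partition :=
  move=> [[[[[[[? []] [? ?]] ?] ?] ?] ?] [? ?]] [[[[[[[? []] [? ?]] ?] ?] ?] ?] [? ?]];
  rewrite /= /rY1 /rY2 /rU10 /rU11 /rV11 /rV20 /rV22 /=;
  by split=> ?; congruence.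

Local Notation RY1 := (@rY1 _ _ _ _ _ _ _ _ _).
Local Notation RY2 := (@rY2 _ _ _ _ _ _ _ _ _).
Local Notation RU10 := (@rU10 _ _ _ _ _ _ _ _ _).
Local Notation RU11 := (@rU11 _ _ _ _ _ _ _ _ _).
Local Notation RV22 := (@rV22 _ _ _ _ _ _ _ _ _).

(* Under p' the eight information terms not involving U11 alone are those of
   p, while the penalty I(V22,V20;U11|U10) drops from a nonnegative value to 0. *)
Lemma inRCC_mergeU11 (U10 U11 V11 V20 V22 X1 X2 Y1 Y2 : finType)
  (W : X1 -> X2 -> (Y1 * Y2)%type -> R) (P : tup7 U10 U11 V11 V20 V22 X1 X2 -> R) :
  is_channel W -> is_pmf P ->
  forall R1 R2, inRCC W P R1 R2 -> inRCC W (mergeU11 P) R1 R2.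
Proof.
move=> HW HP R1 R2.
have bij := @split_outcome_bij U10 U11 V11 V20 V22 X1 X2 Y1 Y2.
have hp := @jointP_mergeU11 U10 U11 V11 V20 V22 X1 X2 Y1 Y2 W P.
have penalty_ge0 := cmi_ge0 (fun w => (rV22 w, rV20 w)) RU11 RU10 (jointP_ge0 HW HP).
rewrite /inRCC cmi_unit.
rewrite (mi_transfer bij hp (a := RY1)
  (b := fun w => (rV11 w, rU11 w, rV20 w, rU10 w))); [|same_partition..].
rewrite (cmi_transfer bij hp (a := RY2) (b := fun w => (rV20 w, rV22 w))
  (c := RU10)); [|same_partition..].
rewrite (cmi_transfer bij hp (a := RY1) (b := fun w => (rV11 w, rU11 w))
  (c := fun w => (rV20 w, rU10 w))); [|same_partition..].
rewrite (mi_transfer bij hp (a := RY2)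
  (b := fun w => (rV22 w, rV20 w, rU10 w))); [|same_partition..].
rewrite (cmi_transfer bij hp (a := RV22) (b := fun w => (rU11 w, rV11 w))
  (c := fun w => (rV20 w, rU10 w))); [|same_partition..].
rewrite (cmi_transfer bij hp (a := RY2) (b := RV22)
  (c := fun w => (rV20 w, rU10 w))); [|same_partition..].
rewrite (cmi_transfer bij hp (a := RY1) (b := fun w => (rV11 w, rU11 w, rV20 w))
  (c := RU10)); [|same_partition..].
rewrite (mi_transfer bij hp (a := RY2)
  (b := fun w => (rV20 w, rV22 w, rU10 w))); [|same_partition..].
by case=> h1 [h2 [h3 [h4 h5]]]; lra.
Qed.

Unset Implicit Arguments.
Theorem mainTheorem3 (U10 U11 V11 V20 V22 X1 X2 Y1 Y2 : finType)
  (W : X1 -> X2 -> (Y1 * Y2)%type -> R)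
  (P : tup7 U10 U11 V11 V20 V22 X1 X2 -> R)
  (HW : is_channel W) (HP : is_pmf P) :
  (forall R1 R2 : R,
     inRCC W P R1 R2 -> inRCC W (mergeU11 P) R1 R2) /\
  (forall R1 R2 : R, inRCC W P R1 R2 ->
     exists Q : tup7 U10 unit (V11 * U11)%type V20 V22 X1 X2 -> R,
       is_pmf Q /\ inRCC W Q R1 R2).
Proof.
have merge_ok := inRCC_mergeU11 HW HP.
split=> // R1 R2 hR; exists (mergeU11 P).
by split; [apply: mergeU11_pmf | apply: merge_ok].
Qed.
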